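(* Let $G = K_{m_1} \otimes \cdots \otimes K_{m_t}$ with $m_i \geq 3$ for all $i$. Then $\dim(G) \geq \max\{m_i - 1 : i = 1,\dots,t\}$.
   Context: $K_r$ is the complete graph on $r$ vertices. The tensor product of graphs has vertex set the Cartesian product of vertex sets, with $(a_1,\dots,a_t)$ adjacent to $(b_1,\dots,b_t)$ iff $a_ib_i$ is an edge of the $i$-th factor for every $i$. For a connected graph and an ordered set $W=\{w_1,\dots,w_k\}$ of vertices, $r(v\mid W)=(d(v,w_1),\dots,d(v,w_k))$; $W$ is resolving if distinct vertices have distinct representations; $\dim(G)$ is the minimum size of a resolving set. *)

From mathcomp Require Import all_boot.
Set Implicit Arguments. Unset Strict Implicit. Unset Printing Implicit Defensive.

Fixpoint ball_set (T : finType) (e : rel T) (x : T) (k : nat) : {set T} :=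
  match k with
  | 0 => [set x]
  | k'.+1 => let B := ball_set e x k' in B :|: [set z | [exists w in B, e w z]]
  end.

(* Graph distance: least k such that y is within k steps of x
   (returns #|T| if y is unreachable, which never happens in a connected graph). *)
Definition gdist (T : finType) (e : rel T) (x y : T) : nat :=
  find (fun k => y \in ball_set e x k) (iota 0 #|T|).

Definition resolving (T : finType) (e : rel T) (W : {set T}) : bool :=
  [forall u : T, forall v : T,
     [forall w in W, gdist e u w == gdist e v w] ==> (u == v)].

Definition metric_dim (T : finType) (e : rel T) : nat :=
  #|[arg min_(W < [set: T] | resolving e W) #|W|]|.

(* Tensor product K_{m_0} x ... x K_{m_(t-1)}: vertices are tuples
   (a_i)_{i<t} with a_i in 'I_(m i); a ~ b iff a_i != b_i for every i
   (a_i b_i is an edge of the complete graph K_{m i}). *)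
Definition tensorK_vertex (t : nat) (m : 'I_t -> nat) : finType :=
  {dffun forall i : 'I_t, 'I_(m i)}.

Definition tensorK_adj (t : nat) (m : 'I_t -> nat) : rel (tensorK_vertex m) :=
  fun a b => [forall i : 'I_t, a i != b i].
Arguments tensorK_adj t m : clear implicits.
Arguments tensorK_vertex t m : clear implicits.

(* Every two vertices of K_{m_1} x ... x K_{m_t} (all m_i >= 3) have a common
   neighbour, so distances only take the values 0, 1, 2 and a vertex w sees the
   distance to u as "w = u", "w ~ u" or neither.  Fix a coordinate j and a set
   W with |W| < m_j - 1.  Then two values a != b avoid {w_j : w in W}; two
   vertices u, v that agree off j and have u_j = a, v_j = b are adjacent to
   exactly the same elements of W and differ from all of them, so W cannot
   resolve them. *)
From mathcomp Require Import all_boot zify.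
Set Implicit Arguments. Unset Strict Implicit. Unset Printing Implicit Defensive.

Section GraphDistance.
Variables (T : finType) (e : rel T).

Lemma resolving_setT : resolving e [set: T].
Proof.
apply/forallP => u; apply/forallP => v; apply/implyP => /forall_inP dist_uv.
have := dist_uv u (in_setT u); rewrite /gdist.
have : 0 < #|T| by apply/card_gt0P; exists u.
case: #|T| => // n _ /=.
by rewrite !inE eqxx /=; case: ifP => // /eqP ->.
Qed.

Lemma leq_metric_dim n :
  (forall W : {set T}, resolving e W -> n <= #|W|) -> n <= metric_dim e.
Proof.
move=> n_le; rewrite /metric_dim.
by case: (arg_minnP (fun W : {set T} => #|W|) resolving_setT) => W /n_le.
Qed.

Lemma mem_ball_set_leq x z k l :
  k <= l -> z \in ball_set e x k -> z \in ball_set e x l.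
Proof.
move=> /subnKC <-; elim: (l - k) => [|n IH zk]; first by rewrite addn0.
by rewrite addnS /= inE IH.
Qed.

Lemma mem_ball_set1 x z : (z \in ball_set e x 1) = (z == x) || e x z.
Proof.
rewrite /= !inE; congr (_ || _).
apply/existsP/idP => [[w /andP [] ]|exz]; first by rewrite inE => /eqP ->.
by exists x; rewrite inE eqxx.
Qed.

Hypothesis ball_set2 : forall x y, y \in ball_set e x 2.

Lemma gdist_diam2_eq x y x' y' :
  (y == x) = (y' == x') -> e x y = e x' y' -> gdist e x y = gdist e x' y'.
Proof.
move=> eq_xy e_xy; apply: eq_find => -[|[|k]].
- by rewrite /= !inE.
- by rewrite !mem_ball_set1 eq_xy e_xy.
- by rewrite !(mem_ball_set_leq (_ : 2 <= k.+2)).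
Qed.

End GraphDistance.

Lemma ord_avoid2 n (a b : 'I_n) : 3 <= n -> exists y : 'I_n, (y != a) && (y != b).
Proof.
move=> n_ge3; have : 0 < #|~: [set a; b]|.
  have := cardsC [set a; b]; rewrite card_ord.
  by have := cards2 a b; case: (a == b) => /= -> ; lia.
by case/card_gt0P => y; rewrite !inE negb_or; exists y.
Qed.

Section TensorComplete.
Variables (t : nat) (m : 'I_t -> nat).
Hypothesis m_ge3 : forall i, 3 <= m i.
Local Notation V := (tensorK_vertex t m).
Local Notation adj := (tensorK_adj t m).

Lemma tensorK_common_neighbour (u w : V) : exists z : V, adj u z && adj z w.
Proof.
have avoid i := ord_avoid2 (u i) (w i) (m_ge3 i).
exists [ffun i => xchoose (avoid i)].
by apply/andP; split; apply/forallP => i; rewrite ffunE;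
  case/andP: (xchooseP (avoid i)); rewrite // eq_sym.
Qed.

Lemma tensorK_ball_set2 (u w : V) : w \in ball_set adj u 2.
Proof.
have [z /andP [uz zw]] := tensorK_common_neighbour u w.
rewrite /= inE; apply/orP; right; rewrite inE; apply/existsP; exists z.
by rewrite -/(ball_set adj u 1) mem_ball_set1 uz orbT zw.
Qed.

Lemma tensorK_adj_off j (u v w : V) :
  (forall i, i != j -> u i = v i) -> w j != u j -> w j != v j -> adj u w = adj v w.
Proof.
move=> uv_off wu wv; apply/forallP/forallP => adj_w i; have := adj_w i;
  case: (eqVneq i j) => [->|/uv_off ->] // _; by rewrite eq_sym.
Qed.

Lemma tensorK_resolving_card j (W : {set V}) :
  resolving adj W -> (m j).-1 <= #|W|.
Proof.
move=> W_res; rewrite leqNgt; apply/negP => W_small.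
set S := [set (w : V) j | w in W].
have : 1 < #|~: S|.
  rewrite cardsCs setCK card_ord.
  by have := leq_imset_card (fun w : V => w j) W; rewrite -/S; have := m_ge3 j; lia.
case/card_gt1P => a [b [aS bS neq_ab]].
pose x : forall i, 'I_(m i) := fun i => Ordinal (leq_trans (isT : 0 < 3) (m_ge3 i)).
pose u : V := [ffun i => dfwith x a i].
pose v : V := [ffun i => dfwith x b i].
have [uj vj] : u j = a /\ v j = b by rewrite !ffunE !dfwith_in.
have uv_off i : i != j -> u i = v i.
  by move=> ij; rewrite !ffunE !dfwith_out // eq_sym.
suff /eqP uv : u == v by case/eqP: neq_ab; rewrite -uj -vj uv.
move/forallP: W_res => /(_ u) /forallP /(_ v) /implyP; apply.
apply/forall_inP => w wW.
have wS : w j \in S by apply: imset_f.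
have [wu wv] : w j != u j /\ w j != v j.
  by rewrite uj vj; split; apply/eqP => wj; [move: aS | move: bS];
    rewrite in_setC -wj wS.
apply/eqP/gdist_diam2_eq; first exact: tensorK_ball_set2.
- by apply/eqP/eqP => wE; [case/eqP: wu | case/eqP: wv]; rewrite wE.
- exact: tensorK_adj_off uv_off wu wv.
Qed.

End TensorComplete.

Theorem corollary2p3 (t : nat) (m : 'I_t -> nat) :
  (forall i : 'I_t, 3 <= m i) ->
  \max_(i < t) (m i).-1 <= metric_dim (tensorK_adj t m).
Proof.
move=> m_ge3; apply/bigmax_leqP => j _; apply: leq_metric_dim => W.
exact: tensorK_resolving_card.
Qed.
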